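(* Let $p\in(p_0,1/2)$ and $a\in(0,0.01)$ be constants, where $p_0$ is the real root of $4x^3-7x^2+5x-1$, and let $k$ be such that $ak$ is an even integer. For $K\subseteq[n]$ with $|K|=k$ let $M_K$ be the event that the subgraph of $G_{n,p}$ induced on $K$ belongs to $\mathcal{F}_k$ (for some choice of partitions). Then for every integer $i\le(1-10a)k$ and all $K,K'\in\binom{[n]}{k}$ with $|K\cap K'|=i$, $$\mathbb{P}[M_K\cap M_{K'}]\le(1-p)^{-(0.5-2a)ki}\,\big(\mathbb{P}[M_K]\big)^2.$$
   Context: A graph $F$ on a $k$-set $K$ is in $\mathcal{F}'_k$ if there are partitions $K=A\cup B$ and $A=A_1\cup\dots\cup A_r$ with $|A|=ak$, $|B|=(1-a)k$, $r=ak/2$, $|A_i|=2$, such that (1) $F$ is bipartite with parts $A$ and $B$, and (2) for every $i$ and every $\beta\in B$, $\beta$ is adjacent either to both vertices of $A_i$ or to neither. $F$ is in $\mathcal{F}_k$ if additionally, for such partitions, (3) every vertex of $A$ has degree at least $0.15k$, and (4) for all $i\ne j$ the symmetric difference of the neighborhoods of $A_i$ and $A_j$ has size at least $0.25k$. *)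

From HB Require Import structures.
From mathcomp Require Import all_boot all_order all_algebra.
From mathcomp Require Import all_classical all_reals all_analysis.
Set Implicit Arguments. Unset Strict Implicit. Unset Printing Implicit Defensive.
Import Order.TTheory GRing.Theory Num.Theory.
Local Open Scope ring_scope.

(* A graph on vertex set 'I_n is a set of 2-element subsets (edges). *)
Definition pairs (n : nat) : {set {set 'I_n}} := [set e : {set 'I_n} | #|e| == 2%N].

Definition adj (n : nat) (G : {set {set 'I_n}}) (x y : 'I_n) : bool :=
  (x != y) && ([set x; y] \in G).

Definition nbhd (n : nat) (G : {set {set 'I_n}}) (K X : {set 'I_n}) : {set 'I_n} :=
  [set y in K | [exists x in X, adj G x y]].

(* The subgraph of G induced on K belongs to F_k (for some choice of partitions
   K = A u B, A = A_1 u ... u A_r satisfying (1)-(4)). *)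
Definition inFk (R : realFieldType) (a : R) (k : nat) (n : nat)
    (G : {set {set 'I_n}}) (K : {set 'I_n}) : Prop :=
  exists (A B : {set 'I_n}) (P : {set {set 'I_n}}),
    [/\ (A :|: B = K /\ [disjoint A & B]),
        (#|A|%:R = a * k%:R) /\ (#|B|%:R = (1 - a) * k%:R),
        (finset.partition P A /\ (#|P|%:R = a * k%:R / 2%:R) /\ (forall X, X \in P -> #|X| = 2%N)) /\
        (forall x y, x \in K -> y \in K -> adj G x y ->
           ((x \in A) && (y \in B)) || ((x \in B) && (y \in A))),
        (forall X b x y, X \in P -> b \in B -> x \in X -> y \in X -> adj G b x = adj G b y)
      &
        (forall x, x \in A -> (15%:R / 100%:R : R) * k%:R <= #|[set y in K | adj G x y]|%:R) /\
        (forall X Y, X \in P -> Y \in P -> X != Y ->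
           (25%:R / 100%:R : R) * k%:R <=
           #|(nbhd G K X :\: nbhd G K Y) :|: (nbhd G K Y :\: nbhd G K X)|%:R)].

(* Probability of an event (a property of graphs on [n]) in G(n,p):
   each of the C(n,2) edges present independently with probability p. *)
Definition Gnp_prob (R : realFieldType) (n : nat) (p : R)
    (E : {set {set 'I_n}} -> Prop) : R :=
  \sum_(G : {set {set 'I_n}} | (G \subset pairs n) && `[< E G >])
     p ^+ #|G| * (1 - p) ^+ (#|pairs n| - #|G|).

(* Write I = K :&: K'.  Conditioning on the edges inside I: if G lies in both
   events, then by bipartiteness G has at most a k |I| edges inside I, among at
   most 'C(|I|, 2) pairs, so (using (1 - p)^4 <= p, which is what p > p0 means)
   the probability that an independent copy H agrees with G inside I is at least
   (1 - p)^((1/2 - 2a) k |I|).  Exchanging the edges inside K between G and such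
   an H produces a graph in M_K and a graph in M_K' of the same total weight,
   injectively; hence (1 - p)^((1/2 - 2a) k |I|) P[M_K /\ M_K'] <= P[M_K] P[M_K'],
   and P[M_K'] = P[M_K] because a vertex permutation maps K' onto K. *)

From HB Require Import structures.
From mathcomp Require Import all_boot all_order all_algebra.
From mathcomp Require Import all_classical all_reals all_analysis.
From mathcomp Require Import ring lra zify.
From mathcomp Require Import fingroup perm action primitive_action alt.
Set Implicit Arguments.
Unset Strict Implicit.
Unset Printing Implicit Defensive.

Import Order.TTheory GRing.Theory Num.Theory.
Local Open Scope ring_scope.

Lemma ler_sum_nneg_subset (R : numDomainType) (I : finType) (P Q : pred I) (F : I -> R) :
  (forall i, P i -> Q i) -> (forall i, Q i -> 0 <= F i) ->
  \sum_(i | P i) F i <= \sum_(i | Q i) F i.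
Proof.
move=> PQ F_ge0; rewrite [leRHS](bigID P) /=.
rewrite (eq_bigl P) => [|i]; last by apply/andP/idP => [[]|Pi]; last split; auto.
by rewrite lerDl sumr_ge0 // => i /andP[/F_ge0].
Qed.

Lemma card_eq_imset_perm (T : finType) (A B : {set T}) :
  #|A| = #|B| -> exists s : {perm T}, s @: A = B.
Proof.
move=> AB; pose tA := [tuple of enum A].
pose tB : #|A|.-tuple T := tcast (esym AB) [tuple of enum B].
have trA := ntransitive_weak (max_card A) (Sym_trans T).
have dtuple (X : {set T}) (t : #|A|.-tuple T) : (t : seq T) = enum X -> t \in #|A|.-dtuple([set: T]).
  by move=> tX; rewrite inE tX enum_uniq; apply/fintype.subsetP => x; rewrite inE.
have [s _ tBs] := atransP2 trA (dtuple A tA erefl) (dtuple B tB (val_tcast _ _)).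
exists s; apply/setP => y.
have : (y \in (tB : seq T)) = (y \in B) by rewrite val_tcast mem_enum.
rewrite tBs /= => <-.
by apply/imsetP/mapP => -[x xA ->]; exists x; rewrite ?mem_enum in xA *.
Qed.

Section SubsetSums.

Variables (R : comNzRingType) (U : finType).

Lemma prod_indicator_weight (F J : {set U}) (x y : R) :
  \prod_e (if e \in J then (if e \in F then x else 0) else (if e \in F then y else 1))
  = if J \subset F then x ^+ #|J| * y ^+ (#|F| - #|J|) else 0.
Proof.
case: ifP => [JF|/negbT /fintype.subsetPn [e eJ eF]]; last first.
  by rewrite (bigD1 e) //= eJ (negbTE eF) mul0r.
rewrite (bigID (mem J)) /= (eq_bigr (fun _ => x)) => [|e /= eJ]; last first.
  by rewrite eJ (fintype.subsetP JF).
rewrite prodr_const (bigID (mem F)) /= (eq_bigr (fun _ => y)) => [|e /andP[/negbTE -> ->]] //.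
rewrite prodr_const big1 ?mulr1 => [|e /andP[/negbTE -> /negbTE ->]] //.
rewrite -(cardsID J F) (finset.setIidPr JF) addKn.
by congr (_ * _ ^+ _); apply: eq_card => e; rewrite !inE.
Qed.

Lemma sum_subset_weights (F : {set U}) (x y : R) :
  \sum_(J : {set U} | J \subset F) x ^+ #|J| * y ^+ (#|F| - #|J|) = (x + y) ^+ #|F|.
Proof.
rewrite big_mkcond /=; under eq_bigr do rewrite -prod_indicator_weight.
rewrite -(@bigA_distr R 0 1 *%R +%R U (fun e => if e \in F then x else 0) (fun e => if e \in F then y else 1)).
rewrite (bigID (mem F)) /= (eq_bigr (fun _ => x + y)) => [|e /= ->] //.
rewrite prodr_const big1 ?mulr1 => [|e /= /negbTE ->]; last by rewrite add0r.
by congr (_ ^+ _); apply: eq_card => e; rewrite !inE.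
Qed.

Definition subset_weight (D : {set U}) (p : R) (G : {set U}) : R :=
  p ^+ #|G| * (1 - p) ^+ (#|D| - #|G|).

Lemma subset_weightM (D G H : {set U}) (p : R) : G \subset D -> H \subset D ->
  subset_weight D p G * subset_weight D p H
  = p ^+ (#|G| + #|H|) * (1 - p) ^+ ((#|D| + #|D|) - (#|G| + #|H|)).
Proof.
move=> /subset_leq_card GD /subset_leq_card HD.
by rewrite mulrACA -!exprD; congr (_ * _ ^+ _); lia.
Qed.

Lemma sum_subset_weight_marginal (D E0 S : {set U}) (p : R) :
  S \subset E0 -> E0 \subset D ->
  \sum_(H : {set U} | (H \subset D) && (H :&: E0 == S)) subset_weight D p H
  = p ^+ #|S| * (1 - p) ^+ (#|E0| - #|S|).
Proof.
move=> SE0 E0D; set F := D :\: E0.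
have cardD : #|D| = (#|E0| + #|F|)%N by rewrite -(cardsID E0 D) (finset.setIidPr E0D).
have /subset_leq_card cardS := SE0.
have sumF1 : \sum_(T : {set U} | T \subset F) p ^+ #|T| * (1 - p) ^+ (#|F| - #|T|) = 1.
  by rewrite sum_subset_weights addrC subrK expr1n.
rewrite -[RHS]mulr1 -[X in _ = _ * X]sumF1 mulr_sumr.
rewrite (reindex_onto (fun T => S :|: T) (fun H => H :\: E0)) => [|H /andP[_ /eqP <-]]; last first.
  exact: finset.setID.
have disjF (T : {set U}) : T \subset F -> [disjoint T & E0].
  by move=> TF; rewrite finset.disjoints_subset (fintype.subset_trans TF) // /F finset.setDE finset.subsetIr.
apply: eq_big => [T|T /andP[/andP[STD _] /eqP TE]].
  apply/idP/idP => [/andP[/andP[STD _] /eqP <-]|TF]; first exact: finset.setSD.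
  rewrite finset.setIUl finset.setDUl (finset.setIidPl SE0) (finset.disjoint_setI0 (disjF T TF)).
  rewrite (finset.setDidPl (disjF T TF)) (eqP (_ : S :\: E0 == finset.set0)) ?finset.setD_eq0 //.
  rewrite finset.setU0 finset.set0U !eqxx !andbT finset.subUset (fintype.subset_trans SE0 E0D).
  by rewrite (fintype.subset_trans TF (finset.subsetDl _ _)).
have TF : T \subset F by rewrite -TE; exact: finset.setSD.
have /subset_leq_card cardT := TF.
have cardST : #|S :|: T| = (#|S| + #|T|)%N.
  apply/eqP; rewrite eqn_leq finset.cardsU leq_subr /=.
  rewrite (finset.disjoint_setI0 (disjointWl SE0 _)) ?cards0 ?subn0 // disjoint_sym; exact: disjF.
rewrite /subset_weight cardST mulrACA -!exprD; congr (_ * _ ^+ _); lia.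
Qed.

End SubsetSums.

Section Splice.

Variable U : finType.
Implicit Types D S T G H : {set U}.

Definition splice S G H : {set U} := (G :&: S) :|: (H :\: S).

Lemma spliceIr S G H : splice S G H :&: S = G :&: S.
Proof. by apply/setP => e; rewrite !inE; case: (e \in S); rewrite ?andbF ?andbT ?orbF. Qed.

Lemma spliceDr S G H : splice S G H :\: S = H :\: S.
Proof. by apply/setP => e; rewrite !inE; case: (e \in S); rewrite ?andbF ?andbT. Qed.

Lemma spliceK S G H : splice S (splice S G H) (splice S H G) = G.
Proof. by rewrite /splice spliceIr spliceDr finset.setID. Qed.

Lemma splice_sub D S G H : G \subset D -> H \subset D -> splice S G H \subset D.
Proof.
move=> GD HD; rewrite finset.subUset.
by rewrite (fintype.subset_trans (finset.subsetIl _ _) GD) (fintype.subset_trans (finset.subsetDl _ _) HD).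
Qed.

Lemma card_splice S G H : (#|splice S G H| + #|splice S H G| = #|G| + #|H|)%N.
Proof.
rewrite -(cardsID S (splice S G H)) -(cardsID S (splice S H G)) !spliceIr !spliceDr.
by rewrite -(cardsID S G) -(cardsID S H); lia.
Qed.

Lemma splice_agree S T G H :
  H :&: (S :&: T) = G :&: (S :&: T) -> splice S H G :&: T = G :&: T.
Proof.
move=> /setP HG; apply/setP => e; have := HG e; rewrite !inE.
by case: (e \in S); case: (e \in T); rewrite ?andbF ?andbT ?orbF.
Qed.

End Splice.

Section RandomSubset.

Variables (R : realFieldType) (U : finType) (D : {set U}) (p : R).
Hypothesis p01 : 0 <= p <= 1.

Local Notation w := (subset_weight D p).

Definition subset_prob (E : {set U} -> Prop) : R :=
  \sum_(G : {set U} | (G \subset D) && `[< E G >]) w G.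

Lemma subset_weight_ge0 G : 0 <= w G.
Proof. by case/andP: p01 => p0 p1; rewrite mulr_ge0 // exprn_ge0 // subr_ge0. Qed.

(* (G, H) |-> (splice S G H, splice S H G) is a weight-preserving involution; it
   maps the index set on the left into pairs of an E-set and an E'-set. *)
Lemma subset_prob_coupling (S T : {set U}) (E E' : {set U} -> Prop) :
    (forall G G', G :&: S = G' :&: S -> E G -> E G') ->
    (forall G G', G :&: T = G' :&: T -> E' G -> E' G') ->
  \sum_(G : {set U} | (G \subset D) && `[< E G /\ E' G >])
     (w G * \sum_(H : {set U} | (H \subset D) && (H :&: (S :&: T) == G :&: (S :&: T))) w H)
  <= subset_prob E * subset_prob E'.
Proof.
move=> locE locE'.
pose phi (u : {set U} * {set U}) := (splice S u.1 u.2, splice S u.2 u.1).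
have phiK : involutive phi by move=> [G H]; rewrite /phi /= !spliceK.
pose Q := [set u : {set U} * {set U} | ((u.1 \subset D) && `[< E u.1 /\ E' u.1 >]) &&
            ((u.2 \subset D) && (u.2 :&: (S :&: T) == u.1 :&: (S :&: T)))].
pose F (u : {set U} * {set U}) := w u.1 * w u.2.
have FphiQ : {in Q, forall u, F (phi u) = F u}.
  move=> [G H]; rewrite inE /F /= => /andP[/andP[GD _] /andP[HD _]].
  by rewrite !subset_weightM ?splice_sub // card_splice.
rewrite [leLHS](_ : _ = \sum_(u in Q) F u); last first.
  under eq_bigr do rewrite mulr_sumr.
  by rewrite pair_big_dep /=; apply: eq_bigl => u; rewrite inE.
rewrite (eq_bigr (F \o phi)) => [|u /FphiQ //].
rewrite -(big_imset _ (in2W (can_inj phiK))) /subset_prob big_distrlr pair_big_dep /=.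
apply: ler_sum_nneg_subset => [v|v _]; last exact: mulr_ge0 (subset_weight_ge0 _) (subset_weight_ge0 _).
case/imsetP => -[G H]; rewrite inE /= => /andP[/andP[GD /asboolP[EG E'G]] /andP[HD /eqP HG]] ->.
rewrite !splice_sub //=; apply/andP; split; apply/asboolP.
  by apply: locE EG; rewrite spliceIr.
by apply: locE' E'G; rewrite splice_agree.
Qed.

End RandomSubset.

Definition pairs_in n (K : {set 'I_n}) : {set {set 'I_n}} := [set e in pairs n | e \subset K].

Lemma pairs_inI n (K K' : {set 'I_n}) : pairs_in (K :&: K') = pairs_in K :&: pairs_in K'.
Proof. by apply/setP => e; rewrite !inE finset.subsetI andbACA andbb. Qed.

Lemma card_pairs_in n (I : {set 'I_n}) : #|pairs_in I| = 'C(#|I|, 2).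
Proof. by rewrite -cards_draws; apply: eq_card => e; rewrite !inE andbC. Qed.

Lemma adj_eq_on n (G G' : {set {set 'I_n}}) (K : {set 'I_n}) :
  G :&: pairs_in K = G' :&: pairs_in K -> {in K &, adj G =2 adj G'}.
Proof.
move=> /setP GG' x y xK yK; rewrite /adj; case: eqP => //= /eqP xy.
have := GG' [set x; y]; rewrite !inE cards2 xy finset.subUset !finset.sub1set xK yK.
by rewrite !andbT.
Qed.

Lemma nbhd_eq_on n (G G' : {set {set 'I_n}}) (K X : {set 'I_n}) :
  {in K &, adj G =2 adj G'} -> X \subset K -> nbhd G K X = nbhd G' K X.
Proof.
move=> GG' XK; apply/setP => y; rewrite !inE; case yK: (y \in K) => //=.
by apply: eq_existsb_in => x xX; rewrite GG' // (fintype.subsetP XK).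
Qed.

Lemma inFk_eq_on (R : realFieldType) (a : R) k n (G G' : {set {set 'I_n}}) (K : {set 'I_n}) :
  G :&: pairs_in K = G' :&: pairs_in K -> inFk a k G K -> inFk a k G' K.
Proof.
move=> /adj_eq_on GG' [A [B [P [[ABK dAB] cardAB [[PA cardP] bip] twin [degA symd]]]]].
have AK : A \subset K by rewrite -ABK finset.subsetUl.
have BK : B \subset K by rewrite -ABK finset.subsetUr.
have XK X : X \in P -> X \subset K.
  by move=> XP; apply: fintype.subset_trans AK; apply: partitionS PA XP.
exists A, B, P; split => //.
- by split => // x y xK yK; rewrite -GG' //; exact: bip.
- move=> X b x y XP bB xX yX.
  have /fintype.subsetP XK' := XK X XP.
  have [bK xK yK] := And3 (fintype.subsetP BK b bB) (XK' x xX) (XK' y yX).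
  by rewrite -!GG' //; exact: twin XP bB xX yX.
- split=> [x xA | X Y XP YP XY]; last by rewrite -!(nbhd_eq_on GG') ?XK //; exact: symd.
  suff <- : [set y in K | adj G x y] = [set y in K | adj G' x y] by exact: degA.
  have xK := fintype.subsetP AK x xA.
  by apply/setP => y; rewrite !inE; case yK: (y \in K); rewrite //= GG'.
Qed.

Section GraphImage.

Variables (n : nat) (s : {perm 'I_n}).
Implicit Types (G : {set {set 'I_n}}) (K X : {set 'I_n}).

Definition graph_image G : {set {set 'I_n}} := [set s @: (e : {set 'I_n}) | e in G].

Lemma mem_imset_perm X x : (s x \in s @: X) = (x \in X).
Proof. exact/mem_imset/perm_inj. Qed.

Lemma adj_graph_image G x y : adj (graph_image G) (s x) (s y) = adj G x y.
Proof.
rewrite /adj; have -> : [set s x; s y] = s @: [set x; y] by rewrite imsetU1 imset_set1.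
by rewrite (inj_eq perm_inj) mem_imset //; apply/imset_inj/perm_inj.
Qed.

Lemma nbhd_graph_image G K X : nbhd (graph_image G) (s @: K) (s @: X) = s @: nbhd G K X.
Proof.
apply/setP => y; rewrite -[y](permKV s) mem_imset_perm !inE mem_imset_perm; congr (_ && _).
apply/existsP/existsP => [[x' /andP[]]|[x /andP[xX h]]].
  by rewrite -[x'](permKV s) mem_imset_perm adj_graph_image => xX h; exists ((s^-1)%g x'); rewrite xX.
by exists (s x); rewrite mem_imset_perm xX adj_graph_image.
Qed.

Lemma inFk_graph_image (R : realFieldType) (a : R) k G K :
  inFk a k G K -> inFk a k (graph_image G) (s @: K).
Proof.
move=> [A [B [P [[ABK dAB] [cardA cardB] [[PA [cardP card2]] bip] twin [degA symd]]]]].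
have sinj : injective s by apply: perm_inj.
have unperm x' : x' = s ((s^-1)%g x') by rewrite permKV.
exists (s @: A), (s @: B), [set s @: (X : {set 'I_n}) | X in P]; split.
- by rewrite -imsetU ABK imset_disjoint.
- by rewrite !card_imset.
- split; first split.
  + by rewrite imset_partition.
  + split; first by rewrite card_imset //; apply: imset_inj.
    by move=> X' /imsetP[X XP ->]; rewrite card_imset // card2.
  + move=> x' y'; rewrite [x']unperm [y']unperm !mem_imset_perm adj_graph_image; exact: bip.
- move=> X' b' x' y' /imsetP[X XP ->].
  rewrite [x']unperm [y']unperm [b']unperm !mem_imset_perm !adj_graph_image; exact: twin.
- split=> [x'|X' Y' /imsetP[X XP ->] /imsetP[Y YP ->] XY].
    rewrite [x']unperm mem_imset_perm => xA.
    suff -> : [set y in s @: K | adj (graph_image G) (s ((s^-1)%g x')) y]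
              = s @: [set y in K | adj G ((s^-1)%g x') y] by rewrite card_imset //; exact: degA.
    by apply/setP => y; rewrite [y]unperm mem_imset_perm !inE mem_imset_perm adj_graph_image.
  set N := nbhd G K X; set N' := nbhd G K Y.
  rewrite !nbhd_graph_image -/N -/N'.
  suff -> : (s @: N :\: s @: N') :|: (s @: N' :\: s @: N) = s @: ((N :\: N') :|: (N' :\: N)).
    by rewrite card_imset //; apply: symd => //; apply: contra XY => /eqP ->.
  by apply/setP => y; rewrite [y]unperm mem_imset_perm !finset.in_setU !finset.in_setD !mem_imset_perm.
Qed.

End GraphImage.

Lemma Gnp_probE (R : realFieldType) n (p : R) (E : {set {set 'I_n}} -> Prop) :
  Gnp_prob p E = subset_prob (pairs n) p E.
Proof. by []. Qed.

Lemma Gnp_prob_inFk_perm (R : realFieldType) (a p : R) k n (s : {perm 'I_n}) (K : {set 'I_n}) :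
  0 <= p <= 1 ->
  Gnp_prob p (fun G => inFk a k G K) <= Gnp_prob p (fun G => inFk a k G (s @: K)).
Proof.
move=> p01; rewrite !Gnp_probE /subset_prob.
set M := [set G : {set {set 'I_n}} | (G \subset pairs n) && `[< inFk a k G K >]].
have img_inj : injective (graph_image s) by apply/imset_inj/imset_inj/perm_inj.
rewrite [leLHS](eq_bigl (mem M)) => [|G]; last by rewrite !inE.
rewrite (eq_bigr (subset_weight (pairs n) p \o graph_image s)) => [|G _]; last first.
  by rewrite /= /subset_weight card_imset //; apply/imset_inj/perm_inj.
rewrite -(big_imset _ (in2W img_inj)) /=.
apply: ler_sum_nneg_subset => [G' /imsetP[G]|G' _]; last exact: subset_weight_ge0.
rewrite inE => /andP[Gpairs /asboolP MG] ->; apply/andP; split; last exact/asboolP/inFk_graph_image.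
apply/fintype.subsetP => e' /imsetP[e eG ->]; rewrite inE card_imset; last exact: perm_inj.
by have := fintype.subsetP Gpairs e eG; rewrite inE.
Qed.

Lemma Gnp_prob_inFk_card (R : realFieldType) (a p : R) k n (K K' : {set 'I_n}) :
  0 <= p <= 1 -> #|K'| = #|K| ->
  Gnp_prob p (fun G => inFk a k G K') <= Gnp_prob p (fun G => inFk a k G K).
Proof.
by move=> p01 /card_eq_imset_perm [s <-]; exact: Gnp_prob_inFk_perm.
Qed.

(* Each edge inside I has an endpoint in A, so it is the image of a pair in A x I. *)
Lemma inFk_card_edges_in (R : realFieldType) (a : R) k n (G : {set {set 'I_n}}) (K I : {set 'I_n}) :
  I \subset K -> inFk a k G K -> #|G :&: pairs_in I|%:R <= a * k%:R * #|I|%:R.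
Proof.
move=> IK [A [B [P [_ [cardA _] [_ bip] _ _]]]].
rewrite -cardA -natrM -cardsX ler_nat.
apply: leq_trans (leq_imset_card (fun u : 'I_n * 'I_n => [set u.1; u.2]) (finset.setX A I)).
apply: subset_leq_card; apply/fintype.subsetP => e; rewrite !inE => /andP[eG /andP[/cards2P [x [y [xy exy]]] eI]].
have [xI yI] : x \in I /\ y \in I by split; apply: (fintype.subsetP eI); rewrite exy !inE eqxx ?orbT.
have Gxy : adj G x y by rewrite /adj xy -exy.
case/orP: (bip x y (fintype.subsetP IK x xI) (fintype.subsetP IK y yI) Gxy) => /andP[xA yA].
  by apply/imsetP; exists (x, y); rewrite // inE xA yI.
by apply/imsetP; exists (y, x); rewrite ?inE ?yA ?xI // exy finset.setUC.
Qed.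

(* p - (1 - p)^4 is the cubic plus p^2 (1 - p^2), and the cubic is positive past
   its root p0 because its difference quotient is a positive quadratic. *)
Lemma cubic_root_exp4_le (R : realFieldType) (p0 p : R) :
  4%:R * p0 ^+ 3 - 7%:R * p0 ^+ 2 + 5%:R * p0 - 1 = 0 -> p0 < p -> p < 1 / 2%:R ->
  0 < p /\ (1 - p) ^+ 4 <= p.
Proof.
move=> root_p0 p0p p_lt_half.
have p0_gt0 : 0 < p0.
  rewrite ltNge; apply/negP => p0_le0.
  have : 4%:R * p0 ^+ 3 - 7%:R * p0 ^+ 2 + 5%:R * p0 - 1 < 0 by nra.
  by rewrite root_p0 ltxx.
have cubic_gt0 : 0 < 4%:R * p ^+ 3 - 7%:R * p ^+ 2 + 5%:R * p - 1.
  rewrite -root_p0 -subr_gt0.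
  have -> : 4%:R * p ^+ 3 - 7%:R * p ^+ 2 + 5%:R * p - 1 - (4%:R * p0 ^+ 3 - 7%:R * p0 ^+ 2 + 5%:R * p0 - 1)
     = (p - p0) * (4%:R * (p ^+ 2 + p * p0 + p0 ^+ 2) - 7%:R * (p + p0) + 5%:R) by ring.
  by apply: mulr_gt0; [rewrite subr_gt0 | nra].
split; first lra.
rewrite -subr_ge0.
have -> : p - (1 - p) ^+ 4 = (4%:R * p ^+ 3 - 7%:R * p ^+ 2 + 5%:R * p - 1) + p ^+ 2 * (1 - p ^+ 2) by ring.
by apply: addr_ge0; [exact: ltW | apply: mulr_ge0; [exact: sqr_ge0 | nra]].
Qed.

(* p^e (1 - p)^(E - e) >= (1 - p)^(3e + E) and 3e + E <= 3aki + i^2/2 <= (1/2 - 2a) k i. *)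
Lemma powR_le_edge_weight (R : realType) (p a : R) (k i e E : nat) :
  0 < p < 1 -> (1 - p) ^+ 4 <= p -> (e <= E)%N -> (E <= 'C(i, 2))%N ->
  e%:R <= a * k%:R * i%:R -> i%:R <= (1 - 10%:R * a) * k%:R ->
  (1 - p) `^ ((1 / 2%:R - 2%:R * a) * k%:R * i%:R) <= p ^+ e * (1 - p) ^+ (E - e).
Proof.
move=> /andP[p_gt0 p_lt1] p4 eE EC e_le i_le.
have q_gt0 : 0 < 1 - p by rewrite subr_gt0.
have E_le : (2 * E <= i * i)%N.
  have : (2 * 'C(i, 2) = i * i.-1)%N by rewrite -(mul_bin_diag i 1) bin1.
  have : (i * i.-1 <= i * i)%N by rewrite leq_mul2l leq_pred orbT.
  lia.
have exponent_le : (3 * e + E)%:R <= (1 / 2%:R - 2%:R * a) * k%:R * i%:R :> R.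
  have /(ler_wpM2r (ler0n _ i)) ii : i%:R <= (1 - 10%:R * a) * k%:R := i_le.
  move: E_le; rewrite -(ler_nat R) !natrM => E_le; rewrite natrD natrM; lra.
apply: (@le_trans _ _ ((1 - p) ^+ (4 * e) * (1 - p) ^+ (E - e))).
  rewrite -exprD (_ : 4 * e + (E - e) = 3 * e + E)%N; last lia.
  rewrite -powR_mulrn; last exact: ltW.
  by apply: ger_powR exponent_le; rewrite q_gt0 gerBl ltW.
apply: ler_wpM2r; first by rewrite exprn_ge0 // ltW.
by rewrite exprM; apply: lerXn2r; rewrite // nnegrE ?exprn_ge0 // ltW.
Qed.

Lemma powR_le_marginal_inFk (R : realType) (p a : R) k n (G : {set {set 'I_n}}) (K K' : {set 'I_n}) :
  0 < p < 1 -> (1 - p) ^+ 4 <= p -> #|K :&: K'|%:R <= (1 - 10%:R * a) * k%:R -> inFk a k G K ->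
  (1 - p) `^ ((1 / 2%:R - 2%:R * a) * k%:R * #|K :&: K'|%:R)
  <= \sum_(H : {set {set 'I_n}} | (H \subset pairs n) &&
          (H :&: (pairs_in K :&: pairs_in K') == G :&: (pairs_in K :&: pairs_in K')))
       subset_weight (pairs n) p H.
Proof.
rewrite -pairs_inI => p_bounds p4 I_le MK.
rewrite sum_subset_weight_marginal ?finset.subsetIr //; last first.
  by apply/fintype.subsetP => e; rewrite inE => /andP[].
apply: powR_le_edge_weight => //.
- exact/subset_leq_card/finset.subsetIr.
- by rewrite card_pairs_in.
- by apply: inFk_card_edges_in MK; exact: finset.subsetIl.
Qed.

Theorem mainTheorem13 (R : realType) (p0 p a : R) (k n i : nat)
    (K K' : {set 'I_n}) :
  4%:R * p0 ^+ 3 - 7%:R * p0 ^+ 2 + 5%:R * p0 - 1 = 0 ->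
  p0 < p -> p < 1 / 2%:R ->
  0 < a -> a < 1 / 100%:R ->
  (exists m : nat, a * k%:R = (2 * m)%N%:R) ->
  i%:R <= (1 - 10%:R * a) * k%:R ->
  #|K| = k -> #|K'| = k -> #|K :&: K'| = i ->
  @Gnp_prob R n p (fun G => @inFk R a k n G K /\ @inFk R a k n G K')
  <= (1 - p) `^ (- ((1 / 2%:R - 2%:R * a) * k%:R * i%:R))
     * (@Gnp_prob R n p (fun G => @inFk R a k n G K)) ^+ 2.
Proof.
move=> root_p0 p0p p_lt_half _ _ _ i_le cardK cardK' cardI.
have [p_gt0 p4] := cubic_root_exp4_le root_p0 p0p p_lt_half.
have p01 : 0 <= p <= 1 by apply/andP; split; lra.
have c_gt0 : 0 < (1 - p) `^ ((1 / 2%:R - 2%:R * a) * k%:R * i%:R) by apply: powR_gt0; lra.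
rewrite powRN ler_pdivlMl // !Gnp_probE.
apply: (@le_trans _ _ (subset_prob (pairs n) p (fun G => inFk a k G K)
                       * subset_prob (pairs n) p (fun G => inFk a k G K'))).
  apply: le_trans (subset_prob_coupling (pairs n) p01 (fun G G' => @inFk_eq_on _ a k n G G' K)
                                           (fun G G' => @inFk_eq_on _ a k n G G' K')).
  rewrite /subset_prob mulr_sumr; apply: ler_sum => G /andP[_ /asboolP[MK _]].
  rewrite mulrC ler_wpM2l ?subset_weight_ge0 // -cardI.
  by apply: powR_le_marginal_inFk; rewrite ?cardI //; apply/andP; split; lra.
rewrite expr2; apply: ler_wpM2l; first by apply: sumr_ge0 => G _; exact: subset_weight_ge0.
by apply: Gnp_prob_inFk_card; rewrite // cardK cardK'.
Qed.
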